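(* Let $C\in\mathcal{P}(n,d)$ with $\mathrm{st}(C)=\{j_1<\cdots<j_\ell\}$. Then $\ell\le d\le n-\ell$ and $j_k\ge 2k$ for all $1\le k\le\ell$.
   Context: $\mathcal{P}(n,d)$ is the set of words $C=C_1\cdots C_n$ in letters $\mathbf{e}$ (east step) and $\mathbf{n}$ (north step) with exactly $d$ letters $\mathbf{e}$. Scan positions left to right and mark position $i$ with $C_i=\mathbf{e}$ if the number of $j<i$ with $C_j=\mathbf{n}$ equals the number of $j<i$ with $C_j=\mathbf{e}$ that are unmarked; $\mathrm{st}(C)$ is the set of unmarked positions $i$ with $C_i=\mathbf{e}$. *)

From mathcomp Require Import all_boot.
Set Implicit Arguments. Unset Strict Implicit. Unset Printing Implicit Defensive.

(* A word C in letters e / n is a [seq bool]: [true] = east step e,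
   [false] = north step n.  Positions are 1-indexed: C_i = nth false C (i-1). *)
Definition is_e (b : bool) : bool := b.

Definition inP (n d : nat) (C : seq bool) : bool :=
  (size C == n) && (count is_e C == d).

(* Accumulator: (#n seen so far, #unmarked e seen so far). Position i with C_i = e is
   marked iff #{j<i : C_j = n} = #{j<i : C_j = e, j unmarked}. *)
Fixpoint marks_aux (nn ue : nat) (C : seq bool) : seq bool :=
  match C with
  | [::] => [::]
  | c :: C' =>
      if c then
        if nn == ue then true :: marks_aux nn ue C'
        else false :: marks_aux nn ue.+1 C'
      else false :: marks_aux nn.+1 ue C'
  end.

Definition marks (C : seq bool) : seq bool := marks_aux 0 0 C.

Definition marked (C : seq bool) (i : nat) : bool := nth false (marks C) i.-1.

Definition st (C : seq bool) : seq nat :=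
  [seq i <- iota 1 (size C) | nth false C i.-1 && ~~ marked C i].

From mathcomp Require Import all_boot.
From mathcomp Require Import zify.

(* The scan keeps the number N of n's and the number U of unmarked e's read
   so far.  An e is left unmarked only when U <> N, and only then does U grow,
   so U <= N throughout.  Hence the letters before the k-th unmarked e include
   k - 1 unmarked e's and at least k n's, which puts it at position >= 2k;
   and at the end l = U <= N = n - d, while trivially l <= d. *)

Fixpoint st_from (nn ue o : nat) (C : seq bool) : seq nat :=
  match C with
  | [::] => [::]
  | c :: C' =>
      if c then
        if nn == ue then st_from nn ue o.+1 C'
        else o :: st_from nn ue.+1 o.+1 C'
      else st_from nn.+1 ue o.+1 C'
  end.

Lemma st_fromE (C : seq bool) (nn ue o : nat) :
  [seq i <- iota o (size C)
     | nth false C (i - o) && ~~ nth false (marks_aux nn ue C) (i - o)]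
  = st_from nn ue o C.
Proof.
elim: C nn ue o => [//|c C IHC] nn ue o /=.
rewrite subnn /=.
have shift nn' ue' (b : bool) :
    [seq i <- iota o.+1 (size C)
       | nth false (c :: C) (i - o) && ~~ nth false (b :: marks_aux nn' ue' C) (i - o)]
    = st_from nn' ue' o.+1 C.
  rewrite -IHC; apply: eq_in_filter => i; rewrite mem_iota => /andP [lt_oi _].
  by rewrite -(subnSK lt_oi).
by case: c shift => /= shift; [case: eqP => _ /= |]; rewrite shift.
Qed.

Lemma st_st_from (C : seq bool) : st C = st_from 0 0 1 C.
Proof.
by rewrite /st /marked /marks -st_fromE; apply: eq_filter => i; rewrite subn1.
Qed.

Lemma size_st_from_count (C : seq bool) (nn ue o : nat) :
  size (st_from nn ue o C) <= count is_e C.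
Proof.
elim: C nn ue o => [//|[] C IHC] nn ue o /=; last exact: IHC.
by case: eqP => _ /=; [apply: leq_trans (IHC _ _ _) (leq_addl _ _) | rewrite ltnS].
Qed.

Lemma size_st_from_north (C : seq bool) (nn ue o : nat) : ue <= nn ->
  ue + size (st_from nn ue o C) <= nn + count (predC is_e) C.
Proof.
elim: C nn ue o => [|[] C IHC] nn ue o ue_le_nn /=; first by rewrite !addn0.
- case: eqP => [_ | nn_neq_ue] /=; first exact: IHC.
  have := IHC nn ue.+1 o.+1; lia.
- have := IHC nn.+1 ue o.+1 (leqW ue_le_nn); lia.
Qed.

Lemma nth_st_from_lb (C : seq bool) (nn ue o k : nat) :
  ue <= nn -> nn + ue < o -> k < size (st_from nn ue o C) ->
  2 * (ue + k).+1 <= nth 0 (st_from nn ue o C) k.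
Proof.
elim: C nn ue o k => [//|[] C IHC] nn ue o k ue_le_nn lt_o /=; last first.
  by apply: IHC; lia.
case: eqP => [_ | nn_neq_ue]; first by apply: IHC; lia.
case: k => [|k] /= lt_k; first by lia.
rewrite addnS -addSn; apply: IHC => //; lia.
Qed.

Theorem lemma4p12 (n d : nat) (C : seq bool) :
  inP n d C ->
  let l := size (st C) in
  [/\ l <= d, d <= n - l &
      forall k, 1 <= k <= l -> 2 * k <= nth 0 (st C) k.-1].
Proof.
move=> /andP [/eqP <- /eqP <-] /=.
rewrite st_st_from.
have count_split : count is_e C + count (predC is_e) C = size C by rewrite count_predC.
have le_e := size_st_from_count C 0 0 1.
have le_n := size_st_from_north C 0 0 1 (leqnn 0).
split; [done | lia |].
move=> k /andP [k_gt0 k_le].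
by have := nth_st_from_lb C 0 0 1 k.-1 (leqnn 0) (ltnSn 0) ltac:(lia); rewrite add0n prednK.
Qed.
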